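(* Let $\mathfrak g$ be a finite-dimensional semisimple Lie algebra and $S\subset\Delta_+$ a nonempty set of positive roots closed under addition within $\Delta_+$. Then $$\widetilde{U(\bar{\mathfrak n}_S)}=U(\bar{\mathfrak n}_{S-})\oplus\widetilde{U(\bar{\mathfrak n}_S)\bar{\mathfrak n}_{S+}},$$ where $U(\bar{\mathfrak n}_{S-})$ is identified with the subspace $\{[\mu]:\mu\in F(S),\ \mathrm{Supp}(\mu)\subset M(S)_-\}$ of $\widetilde{U(\bar{\mathfrak n}_S)}$.
   Context: $\mathfrak g$ has Cartan subalgebra $\mathfrak h$, roots $\Delta$, positive roots $\Delta_+$; root vectors $x_\alpha$ satisfy $[x_\alpha,x_\beta]=C_{\alpha,\beta}x_{\alpha+\beta}$ ($C_{\alpha,\beta}=0$ if $\alpha+\beta$ is not a root). $S\subset\Delta_+$ nonempty with $\alpha,\beta\in S,\ \alpha+\beta\in\Delta_+\Rightarrow\alpha+\beta\in S$; $\mathfrak n_S=\bigoplus_{\alpha\in S}\mathbb Cx_\alpha$, $\bar{\mathfrak n}_S=\mathfrak n_S\otimes\mathbb C[t,t^{-1}]$, $\bar{\mathfrak n}_{S-}=\mathfrak n_S\otimes t^{-1}\mathbb C[t^{-1}]$, $\bar{\mathfrak n}_{S+}=\mathfrak n_S\otimes\mathbb C[t]$. $M(S)$ is the free monoid on $\mathbb Z\times S$ (words $a=((m_1,\beta_1),\dots,(m_p,\beta_p))$, concatenation $\circ$); $a\le j$ means $m_l+\cdots+m_p\le j$ for all $l$. For $\mu:M(S)\to\mathbb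 C$, $\mathrm{Supp}(\mu)=\{a:\mu(a)\ne0\}$, $\mathrm{Supp}_j(\mu)=\{a\in\mathrm{Supp}(\mu):a\le j\}$. $F(S)$ is the algebra of $\mu$ with every $\mathrm{Supp}_j(\mu)$ finite, product $(\mu_1\mu_2)(a)=\sum_{a=b\circ c}\mu_1(b)\mu_2(c)$; $X_\beta(m)$ is the indicator of a one-letter word and $X(a)=X_{\beta_1}(m_1)\cdots X_{\beta_p}(m_p)$. $\widetilde I_S$ is the two-sided ideal of $F(S)$ generated by $X_\alpha(m)X_\beta(l)-X_\beta(l)X_\alpha(m)-C_{\alpha,\beta}X_{\alpha+\beta}(m+l)$ ($\alpha,\beta\in S$), $\widetilde{U(\bar{\mathfrak n}_S)}=F(S)/\widetilde I_S$, $[\mu]$ the class of $\mu$. $M(S)_-$ is the set of words with all $m_l\le-1$; $M(S)_+$ is the set of words with $p\ge1$ and $m_l+\cdots+m_p\ge0$ for some $l$; $\widetilde{U(\bar{\mathfrak n}_S)\bar{\mathfrak n}_{S+}}=\{[\mu]:\mu\in F(S),\ \mathrm{Supp}(\mu)\subset M(S)_+\}$. *)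

From HB Require Import structures.
From mathcomp Require Import all_boot all_order all_algebra.
From mathcomp Require Import Rstruct complex.
Set Implicit Arguments.
Unset Strict Implicit.
Unset Printing Implicit Defensive.
Import Order.TTheory GRing.Theory Num.Theory.
Local Open Scope ring_scope.

Definition Cx : fieldType := (Rdefinitions.R)[i].

Section Lie.
Variables (L : vectType Cx) (br : L -> L -> L).

Definition lie_algebra : Prop :=
  [/\ (forall (a : Cx) x y z, br (a *: x + y) z = a *: br x z + br y z),
      (forall (a : Cx) x y z, br z (a *: x + y) = a *: br z x + br z y),
      (forall x, br x x = 0) &
      (forall x y z, br x (br y z) + br y (br z x) + br z (br x y) = 0)].

(* [U, V] : the subspace spanned by all brackets [u, v], u in U, v in V
   (by bilinearity it is spanned by brackets of basis vectors). *)
Definition brspace (U V : {vspace L}) : {vspace L} :=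
  <<[seq br u v | u <- vbasis U, v <- vbasis V]>>%VS.

Definition lie_subalgebra (U : {vspace L}) : Prop :=
  forall x y, x \in U -> y \in U -> br x y \in U.

Definition lie_ideal (I : {vspace L}) : Prop :=
  forall x y, y \in I -> br x y \in I.

Definition solvable_sub (I : {vspace L}) : Prop :=
  exists k, iter k (fun U => brspace U U) I = 0%VS.

Definition nilpotent_sub (U : {vspace L}) : Prop :=
  exists k, iter k (fun V => brspace U V) U = 0%VS.

Definition semisimple : Prop :=
  forall I : {vspace L}, lie_ideal I -> solvable_sub I -> I = 0%VS.

Definition cartan_subalgebra (h : {vspace L}) : Prop :=
  [/\ lie_subalgebra h, nilpotent_sub h &
      (forall x, (forall y, y \in h -> br x y \in h) -> x \in h)].

Variable h : {vspace L}.

Definition hdual := 'Hom(subvs_of h, Cx^o).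

Definition in_rootspace (alpha : hdual) (v : L) : Prop :=
  forall t : subvs_of h, br (vsval t) v = (alpha t : Cx) *: v.

Definition is_root (alpha : hdual) : Prop :=
  alpha != 0 /\ exists2 v, v != 0 & in_rootspace alpha v.

Definition positive_system (P : hdual -> Prop) : Prop :=
  [/\ (forall a, P a -> is_root a),
      (forall a, is_root a -> P a \/ P (- a)),
      (forall a, P a -> ~ P (- a)) &
      (forall a b, P a -> P b -> is_root (a + b) -> P (a + b))].

End Lie.

Section Words.
Variables (A : zmodType) (S : A -> Prop).

Definition word := seq (int * A).

Definition in_MS (a : word) : Prop := forall x, List.In x a -> S x.2.

(* m_l + ... + m_p, for l = i+1 (0-based i) *)
Definition suffix_sum (a : word) (i : nat) : int :=
  \sum_(x <- drop i a) x.1.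

Definition word_le (a : word) (j : int) : Prop :=
  forall i, (i < size a)%N -> suffix_sum a i <= j.

(* mu : M(S) -> C is represented by a function on all words vanishing off M(S) *)
Definition series := word -> Cx.

Definition inF (mu : series) : Prop :=
  (forall a, mu a != 0 -> in_MS a) /\
  (forall j : int, exists s : seq word,
      forall a, mu a != 0 -> word_le a j -> a \in s).

Definition supp_in (mu : series) (X : word -> Prop) : Prop :=
  forall a, mu a != 0 -> X a.

Definition smul (mu1 mu2 : series) : series :=
  fun a => \sum_(i < (size a).+1) mu1 (take i a) * mu2 (drop i a).

Definition sadd (mu1 mu2 : series) : series := fun a => mu1 a + mu2 a.
Definition ssub (mu1 mu2 : series) : series := fun a => mu1 a - mu2 a.
Definition szero : series := fun _ => 0.

(* indicator of a word; X_beta(m) = ind [:: (m, beta)] *)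
Definition ind (w : word) : series := fun a => (a == w)%:R.

Variable C : A -> A -> Cx.

Definition gen (al : A) (m : int) (be : A) (l : int) : series :=
  fun a => ind [:: (m, al); (l, be)] a - ind [:: (l, be); (m, al)] a
           - C al be * ind [:: (m + l, al + be)] a.

Inductive inI : series -> Prop :=
| inI0 : inI szero
| inIadd mu1 mu2 : inI mu1 -> inI mu2 -> inI (sadd mu1 mu2)
| inIgen u v al m be l : inF u -> inF v -> S al -> S be ->
    inI (smul (smul u (gen al m be l)) v).

(* M(S)_- : all m_l <= -1 (includes the empty word) *)
Definition Mminus (a : word) : Prop := forall x, List.In x a -> x.1 <= -1.

Definition Mplus (a : word) : Prop :=
  (0 < size a)%N /\ exists2 i, (i < size a)%N & 0 <= suffix_sum a i.

End Words.

From HB Require Import structures.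
From mathcomp Require Import all_boot all_order all_algebra.
From mathcomp Require Import Rstruct complex.
From mathcomp Require Import ring zify.
From Stdlib Require Import FunctionalExtensionality Classical.
Set Implicit Arguments.
Unset Strict Implicit.
Unset Printing Implicit Defensive.
Import Order.TTheory GRing.Theory Num.Theory.
Local Open Scope ring_scope.

(* Existence.  Modulo the defining relations, a letter x_be(m) with m >= 0
   can be moved to the right past the negative letters that follow it, at the
   cost of merged letters x_(al+be)(m+l); iterating, every word becomes a
   combination of negative words and of words in M(S)_+.  A word outside
   M(S)_+ satisfies a <= -1, so only finitely many words of an element of
   F(S) have to be rewritten.

   Uniqueness.  F(S) acts on the span of negative words, i.e. on the module
   induced from the trivial representation of n_{S+}: a negative letter
   multiplies on the left and a nonnegative one is commuted to the right,
   where it kills the vacuum.  By antisymmetry and the Jacobi identity of the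
   structure constants, the ideal acts through relations among negative
   words.  On the vacuum a word of M(S)_+ gives 0 (its nonnegative suffix
   would produce negative words of nonnegative total mode) and a negative
   word gives itself.  Hence if mu_- - mu_+ lies in the ideal, then so does
   mu_-. *)

(* Finite formal linear combinations, compared through their coefficient
   functions [coef t]: two lists denoting the same combination are
   identified only up to [coef t =1 coef t']. *)
Section Combinations.
Variable T : eqType.

Definition comb := seq (Cx * T).
Definition coef (t : comb) (w : T) : Cx := \sum_(p <- t) p.1 * (p.2 == w)%:R.
Definition scalec (k : Cx) (t : comb) : comb := [seq (k * p.1, p.2) | p <- t].

Lemma coef_nil w : coef [::] w = 0.
Proof. by rewrite /coef big_nil. Qed.

Lemma coef_cat t1 t2 w : coef (t1 ++ t2) w = coef t1 w + coef t2 w.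
Proof. by rewrite /coef big_cat. Qed.

Lemma coef_cons p t w : coef (p :: t) w = p.1 * (p.2 == w)%:R + coef t w.
Proof. by rewrite /coef big_cons. Qed.

Lemma coef1 (x w : T) : coef [:: (1, x)] w = (x == w)%:R.
Proof. by rewrite coef_cons coef_nil mul1r addr0. Qed.

Lemma coef_scalec k t w : coef (scalec k t) w = k * coef t w.
Proof.
rewrite /coef /scalec big_map mulr_sumr; apply: eq_bigr => p _ /=; by rewrite mulrA.
Qed.

Definition defect (X Y : comb) (k : Cx) (Z : comb) : comb :=
  X ++ scalec (-1) Y ++ scalec (- k) Z.

Lemma coef_defect X Y k Z w : coef (defect X Y k Z) w = coef X w - coef Y w - k * coef Z w.
Proof. rewrite /defect !coef_cat !coef_scalec; ring. Qed.

Lemma coef_flatten ts w : coef (flatten ts) w = \sum_(t <- ts) coef t w.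
Proof.
elim: ts => [|t ts IH]; first by rewrite big_nil coef_nil.
by rewrite /= coef_cat IH big_cons.
Qed.

Lemma coef_supp t w : coef t w != 0 -> w \in map snd t.
Proof.
apply: contraR => nw; apply/eqP; rewrite /coef big1_seq // => p /andP [_ pt].
case: eqP => [e|_]; last by rewrite mulr0.
by exfalso; apply: (negP nw); rewrite -e; apply: map_f.
Qed.

Lemma mem_scalec k t p : p \in scalec k t -> exists2 q, q \in t & p.2 = q.2.
Proof. by case/mapP=> q qt ->; exists q. Qed.

Lemma sum_coef (U : seq T) t (F : T -> Cx) :
  uniq U -> (forall p, p \in t -> p.2 \in U) ->
  \sum_(p <- t) p.1 * F p.2 = \sum_(w <- U) coef t w * F w.
Proof.
move=> uU tU.
have -> : \sum_(w <- U) coef t w * F w =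
          \sum_(w <- U) \sum_(p <- t) p.1 * ((p.2 == w)%:R * F w).
  apply: eq_bigr => w _; rewrite /coef mulr_suml; apply: eq_bigr => p _.
  by rewrite mulrA.
rewrite exchange_big /=; apply: eq_big_seq => p pt; rewrite -mulr_sumr; congr (_ * _).
rewrite (bigD1_seq p.2) //= ?(tU p pt) // eqxx mul1r big1 ?addr0 // => w.
by rewrite eq_sym => /negbTE ->; rewrite mul0r.
Qed.

Lemma sum_coef_eq t1 t2 (F : T -> Cx) : coef t1 =1 coef t2 ->
  \sum_(p <- t1) p.1 * F p.2 = \sum_(p <- t2) p.1 * F p.2.
Proof.
move=> e; set U := undup (map snd t1 ++ map snd t2).
have uU : uniq U by apply: undup_uniq.
rewrite (@sum_coef U) // ?(@sum_coef U t2) //.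
- by apply: eq_bigr => w _; rewrite e.
- move=> p pt; rewrite mem_undup mem_cat; apply/orP; right; by apply: map_f.
- move=> p pt; rewrite mem_undup mem_cat; apply/orP; left; by apply: map_f.
Qed.

Lemma sum_pick (s : seq T) (f : T -> Cx) w0 : uniq s ->
  \sum_(c <- s) f c * (c == w0)%:R = if w0 \in s then f w0 else 0.
Proof.
move=> us; case: ifP => ws.
  rewrite (bigD1_seq w0) //= eqxx mulr1 big1 ?addr0 // => c /negbTE ->.
  by rewrite mulr0.
rewrite big1_seq // => c /andP [_ cs]; case: eqP => [e|_]; last by rewrite mulr0.
by move: ws; rewrite -e cs.
Qed.

Section Closure.
Variable P : comb -> Prop.
Hypotheses (P0 : P [::]) (Pcat : forall t1 t2, P t1 -> P t2 -> P (t1 ++ t2))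
  (Pscale : forall k t, P t -> P (scalec k t))
  (Pcoef : forall t t', P t -> coef t =1 coef t' -> P t').

Lemma closed_coef0 t : (forall w, coef t w = 0) -> P t.
Proof. move=> e; apply: (Pcoef P0) => w; by rewrite coef_nil e. Qed.

Lemma closed_comb t (ts : seq (Cx * comb)) : (forall q, q \in ts -> P q.2) ->
  (forall w, coef t w = \sum_(q <- ts) q.1 * coef q.2 w) -> P t.
Proof.
move=> H e.
have Pf : P (flatten [seq scalec q.1 q.2 | q <- ts]).
  elim: ts H {e} => [|q ts IH] H /=; first exact: P0.
  apply: Pcat; first by apply: Pscale; apply: H; rewrite inE eqxx.
  apply: IH => q' qt; apply: H; by rewrite inE qt orbT.
apply: (Pcoef Pf) => w; rewrite e coef_flatten big_map; apply: eq_bigr => q _.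
by rewrite coef_scalec.
Qed.

End Closure.

End Combinations.

Section Bind.
Variables T T' : eqType.

Definition bindc (f : T -> comb T') (t : comb T) : comb T' :=
  flatten [seq scalec p.1 (f p.2) | p <- t].

Lemma bindc_cat f t1 t2 : bindc f (t1 ++ t2) = bindc f t1 ++ bindc f t2.
Proof. by rewrite /bindc map_cat flatten_cat. Qed.

Lemma bindc_nil f : bindc f [::] = [::].
Proof. by []. Qed.

Lemma bindc_cons f p t : bindc f (p :: t) = scalec p.1 (f p.2) ++ bindc f t.
Proof. by []. Qed.

Lemma sum_bindc g t (G : T' -> Cx) :
  \sum_(p <- bindc g t) p.1 * G p.2 =
  \sum_(p <- t) p.1 * \sum_(q <- g p.2) q.1 * G q.2.
Proof.
elim: t => [|p t IH]; first by rewrite /bindc /= !big_nil.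
rewrite bindc_cons big_cat IH big_cons; congr (_ + _).
rewrite /scalec big_map mulr_sumr; apply: eq_bigr => q _ /=; by rewrite mulrA.
Qed.

Lemma coef_bindc f t w : coef (bindc f t) w = \sum_(p <- t) p.1 * coef (f p.2) w.
Proof. by rewrite /coef (sum_bindc _ _ (fun x => (x == w)%:R)). Qed.

Lemma bindc_coef_eq f t1 t2 : coef t1 =1 coef t2 -> coef (bindc f t1) =1 coef (bindc f t2).
Proof. move=> e w; rewrite !coef_bindc; exact: (sum_coef_eq (fun u => coef (f u) w) e). Qed.

Lemma bindc_scalec f k t : coef (bindc f (scalec k t)) =1 coef (scalec k (bindc f t)).
Proof.
move=> w; rewrite coef_scalec !coef_bindc /scalec big_map mulr_sumr.
apply: eq_bigr => p _ /=; by rewrite mulrA.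
Qed.

Lemma coef_bindc_defect f X Y k Z w : coef (bindc f (defect X Y k Z)) w =
  coef (bindc f X) w - coef (bindc f Y) w - k * coef (bindc f Z) w.
Proof. rewrite /defect !bindc_cat !coef_cat !bindc_scalec !coef_scalec; ring. Qed.

Lemma mem_bindc (P : T' -> Prop) f t :
  (forall q, q \in t -> forall p, p \in f q.2 -> P p.2) ->
  forall p, p \in bindc f t -> P p.2.
Proof.
elim: t => [|q t IH] H p; first by [].
rewrite bindc_cons mem_cat => /orP [|].
  case/mapP=> p' p'f -> /=; exact: (H q (mem_head _ _) p' p'f).
apply: IH => q' q't; apply: H; by rewrite inE q't orbT.
Qed.

Lemma closed_bindc (P : comb T' -> Prop) f t : P [::] ->
  (forall t1 t2, P t1 -> P t2 -> P (t1 ++ t2)) ->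
  (forall k t, P t -> P (scalec k t)) ->
  (forall p, p \in t -> P (f p.2)) -> P (bindc f t).
Proof.
move=> P0 Pcat Pscale; elim: t => [|p t IH] H; first exact: P0.
rewrite bindc_cons; apply: Pcat; first by apply: Pscale; apply: H; rewrite inE eqxx.
apply: IH => q qt; apply: H; by rewrite inE qt orbT.
Qed.

End Bind.

Lemma bindc_comp (T T' T'' : eqType) (f : T' -> comb T'') (g : T -> comb T') t :
  coef (bindc f (bindc g t)) =1 coef (bindc (fun w => bindc f (g w)) t).
Proof.
move=> w; rewrite coef_bindc (sum_bindc _ _ (fun u => coef (f u) w)) coef_bindc.
by apply: eq_bigr => p _; rewrite coef_bindc.
Qed.

Lemma In_mem (T : eqType) (x : T) (s : seq T) : List.In x s <-> x \in s.
Proof.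
elim: s => [|y s IH] /=; first by split.
rewrite inE; split.
- case=> [->|/IH ->]; by rewrite ?eqxx ?orbT.
- case/orP=> [/eqP ->|/IH]; by [left|right].
Qed.

(* The letter (m, be) of a word stands for x_be(m) = x_be (x) t^m. *)
Section Words.
Variable A : zmodType.
Local Notation letter := (int * A)%type.
Local Notation wd := (word A).
Local Notation series := (series A).

Definition lneg (x : letter) : bool := x.1 <= -1.
Definition ladd (x y : letter) : letter := (x.1 + y.1, x.2 + y.2).

Lemma lneg_ladd x y : lneg x -> lneg y -> lneg (ladd x y).
Proof. rewrite /lneg /ladd /=; lia. Qed.

Lemma nlneg_ladd x y : ~~ lneg x -> ~~ lneg y -> ~~ lneg (ladd x y).
Proof. rewrite /lneg /ladd /=; lia. Qed.

Lemma laddA x y z : ladd x (ladd y z) = ladd (ladd x y) z.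
Proof. by rewrite /ladd /= !addrA. Qed.

Lemma laddC x y : ladd x y = ladd y x.
Proof. by rewrite /ladd addrC [X in (_, X)]addrC. Qed.

Lemma laddAC x y z : ladd (ladd x y) z = ladd (ladd x z) y.
Proof. by rewrite /ladd /= addrAC [X in (_, X)]addrAC. Qed.

Definition deg (w : wd) : int := \sum_(x <- w) x.1.

Lemma deg_cons c w : deg (c :: w) = c.1 + deg w.
Proof. by rewrite /deg big_cons. Qed.

Lemma deg_cat u v : deg (u ++ v) = deg u + deg v.
Proof. by rewrite /deg big_cat. Qed.

Lemma deg_neg_le w : all lneg w -> w != [::] -> deg w <= -1.
Proof.
elim: w => [//|c w IH] /= /andP [nc nw] _; rewrite deg_cons.
case: w IH nw => [|c' w'] IH nw.
  by rewrite /deg big_nil addr0.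
have := IH nw isT; move: nc; rewrite /lneg; lia.
Qed.

Definition Mplusb (w : wd) : bool :=
  (0 < size w)%N && has (fun i => 0 <= suffix_sum w i) (iota 0 (size w)).

Lemma MplusP w : reflect (Mplus w) (Mplusb w).
Proof.
apply: (iffP andP) => [[s H]|[s [i il si]]].
  case/hasP: H => i; rewrite mem_iota add0n => /andP [_ il] si; split => //; by exists i.
by split => //; apply/hasP; exists i => //; rewrite mem_iota add0n il.
Qed.

Definition word_leb (w : wd) (j : int) : bool :=
  all (fun i => suffix_sum w i <= j) (iota 0 (size w)).

Lemma word_leP w j : reflect (word_le w j) (word_leb w j).
Proof.
apply: (iffP allP) => H.
  by move=> i il; apply: H; rewrite mem_iota add0n il.
by move=> i; rewrite mem_iota add0n => /andP [_ il]; apply: H.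
Qed.

Lemma suffix_sum_cat (y r : wd) i : (i < size y)%N ->
  suffix_sum (y ++ r) i = suffix_sum y i + deg r.
Proof. by move=> il; rewrite /suffix_sum drop_cat il big_cat. Qed.

Lemma Mplus_drop (w : wd) i : Mplus (drop i w) -> Mplus w.
Proof.
case=> s [k kl ks]; rewrite size_drop in s kl.
split; first by move: s; rewrite subn_gt0; case: (size w).
exists (i + k)%N; first by move: kl; rewrite ltn_subRL.
by move: ks; rewrite /suffix_sum drop_drop addnC.
Qed.

Lemma Mplusb_cons c w : Mplusb w -> Mplusb (c :: w).
Proof. move/MplusP => H; apply/MplusP; apply: (@Mplus_drop (c :: w) 1); by rewrite /= drop0. Qed.

Lemma notMplusb_le (w : wd) : ~~ Mplusb w -> word_le w (-1).
Proof.
move/MplusP=> H i il; rewrite leNgt; apply/negP => si; apply: H; split.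
  by case: (size w) il.
by exists i => //; move: si; rewrite /Num.Def.ltr /=; lia.
Qed.

Lemma Mminus_le (w : wd) : Mminus w -> word_le w (-1).
Proof.
move=> H i il; rewrite /suffix_sum -/(deg _); apply: deg_neg_le.
  by apply/allP => x /mem_drop xw; apply: H; apply/In_mem.
by rewrite -size_eq0 size_drop subn_eq0 -ltnNge.
Qed.

Lemma smul_ext (mu1 mu2 nu1 nu2 : series) : mu1 =1 mu2 -> nu1 =1 nu2 ->
  smul mu1 nu1 =1 smul mu2 nu2.
Proof. move=> e1 e2 w; rewrite /smul; apply: eq_bigr => i _; by rewrite e1 e2. Qed.

Lemma smul_sumr (I : Type) (ts : seq (Cx * I)) (F : I -> series) (mu : series) :
  smul mu (fun w => \sum_(p <- ts) p.1 * F p.2 w) =1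
  fun w => \sum_(p <- ts) p.1 * smul mu (F p.2) w.
Proof.
move=> w; rewrite /smul.
under eq_bigr => i _ do rewrite mulr_sumr.
rewrite exchange_big /=; apply: eq_bigr => p _; rewrite mulr_sumr.
apply: eq_bigr => i _; ring.
Qed.

Lemma smul_suml (I : Type) (ts : seq (Cx * I)) (F : I -> series) (nu : series) :
  smul (fun w => \sum_(p <- ts) p.1 * F p.2 w) nu =1
  fun w => \sum_(p <- ts) p.1 * smul (F p.2) nu w.
Proof.
move=> w; rewrite /smul.
under eq_bigr => i _ do rewrite mulr_suml.
rewrite exchange_big /=; apply: eq_bigr => p _; rewrite mulr_sumr.
apply: eq_bigr => i _; ring.
Qed.

Lemma smul_addr (mu nu1 nu2 : series) :
  smul mu (fun w => nu1 w + nu2 w) =1 fun w => smul mu nu1 w + smul mu nu2 w.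
Proof. move=> w; rewrite /smul -big_split; apply: eq_bigr => i _ /=; ring. Qed.

Lemma smul_addl (mu1 mu2 nu : series) :
  smul (fun w => mu1 w + mu2 w) nu =1 fun w => smul mu1 nu w + smul mu2 nu w.
Proof. move=> w; rewrite /smul -big_split; apply: eq_bigr => i _ /=; ring. Qed.

Lemma smul_scalel k (mu nu : series) :
  smul (fun w => k * mu w) nu =1 fun w => k * smul mu nu w.
Proof. move=> w; rewrite /smul mulr_sumr; apply: eq_bigr => i _ /=; ring. Qed.

Lemma coef_ind (t : comb wd) : coef t =1 fun w => \sum_(p <- t) p.1 * ind p.2 w.
Proof. move=> w; rewrite /coef /ind; apply: eq_bigr => p _; by rewrite eq_sym. Qed.

Lemma smul_ind (u v : wd) : smul (ind u) (ind v) =1 ind (u ++ v).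
Proof.
move=> a; rewrite /smul /ind.
case: (a =P u ++ v) => [->|ne].
  have lt : (size u < (size (u ++ v)).+1)%N by rewrite ltnS size_cat leq_addr.
  rewrite (bigD1 (Ordinal lt)) //= take_size_cat // drop_size_cat // !eqxx mul1r.
  rewrite big1 ?addr0 // => i /eqP ni.
  case: eqP => [e|_]; last by rewrite mul0r.
  exfalso; apply: ni; apply: val_inj => /=.
  have := congr1 size e; rewrite size_take.
  have := ltn_ord i; rewrite ltnS leq_eqVlt => /orP [/eqP ->|->] //.
  by rewrite ltnn => ->.
rewrite big1 // => i _; case: eqP => [e1|_]; last by rewrite mul0r.
case: eqP => [e2|_]; last by rewrite mulr0.
by exfalso; apply: ne; rewrite -e1 -e2 cat_take_drop.
Qed.

Lemma smul_ind3 (u x v : wd) : smul (smul (ind u) (ind x)) (ind v) =1 ind (u ++ x ++ v).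
Proof.
move=> w; rewrite (smul_ext (smul_ind u x) (frefl _) w) smul_ind catA //.
Qed.

Lemma smul_supp (mu nu : series) w : smul mu nu w != 0 ->
  exists i, mu (take i w) != 0 /\ nu (drop i w) != 0.
Proof.
rewrite /smul => /eqP H.
case: (pickP (fun i : 'I_(size w).+1 => mu (take i w) * nu (drop i w) != 0)) => [i Hi|H0].
  by exists i; move: Hi; rewrite mulf_eq0 negb_or => /andP [].
exfalso; apply: H; apply: big1 => i _; have := H0 i; by move/negbFE/eqP.
Qed.

Lemma restr_coef (mu : series) (P : pred wd) (s : seq wd) :
  (forall w, mu w != 0 -> P w -> w \in s) ->
  (fun w => if P w then mu w else 0) =1
  coef [seq (mu c, c) | c <- filter (fun c => (mu c != 0) && P c) (undup s)].
Proof.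
move=> H w; rewrite /coef big_map /= sum_pick ?filter_uniq ?undup_uniq //.
rewrite mem_filter mem_undup.
case: (mu w =P 0) => [->|/eqP m0] /=; first by case: (P w); case: (w \in s).
by case Pw: (P w) => //=; rewrite (H _ m0 Pw).
Qed.

End Words.

Arguments lneg {A} x.

Section Decomposition.
Variables (A : zmodType) (S : A -> Prop) (C : A -> A -> Cx).
Hypothesis C_closed : forall a b, S a -> S b -> C a b != 0 -> S (a + b).
Hypothesis C_anti : forall a b, S a -> S b -> C a b = - C b a.
Hypothesis C_jacobi : forall a b c, S a -> S b -> S c ->
  C b c * C a (b + c) + C c a * C b (c + a) + C a b * C c (a + b) = 0.

Local Notation letter := (int * A)%type.
Local Notation wd := (word A).

Definition sc (x y : letter) : Cx := C x.2 y.2.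

Definition lcons (c : letter) (t : comb wd) : comb wd := bindc (fun w => [:: (1, c :: w)]) t.

(* The action of a letter of nonnegative mode on a negative word: it is
   commuted to the right, a merged letter that became negative stopping in
   place, and it kills the empty word (the vacuum). *)
Fixpoint act_pos (w : wd) (l : letter) : comb wd :=
  match w with
  | [::] => [::]
  | c :: w' => lcons c (act_pos w' l) ++
      (if sc l c == 0 then [::] else scalec (sc l c)
         (let z := ladd l c in if lneg z then [:: (1, z :: w')] else act_pos w' z))
  end.

Definition actw (l : letter) (w : wd) : comb wd :=
  if lneg l then [:: (1, l :: w)] else act_pos w l.

Definition act (l : letter) (t : comb wd) : comb wd := bindc (actw l) t.

(* The merged term is dropped when its coefficient vanishes, so that the
   relation involves only letters over S. *)
Definition relw (u : wd) (a b : letter) (v : wd) : comb wd :=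
  [:: (1, u ++ a :: b :: v); (-1, u ++ b :: a :: v)] ++
  (if sc a b == 0 then [::] else [:: (- sc a b, u ++ ladd a b :: v)]).

Definition negw (w : wd) : Prop := forall x, x \in w -> S x.2 /\ lneg x.
Definition negc (t : comb wd) : Prop := forall p, p \in t -> negw p.2.

(* The relations of U(n_{S-}): the ideal generated by the commutation
   relations among negative letters. *)
Inductive Jneg : comb wd -> Prop :=
| Jneg0 : Jneg [::]
| Jneg_cat t1 t2 : Jneg t1 -> Jneg t2 -> Jneg (t1 ++ t2)
| Jneg_scale k t : Jneg t -> Jneg (scalec k t)
| Jneg_coef t t' : Jneg t -> coef t =1 coef t' -> Jneg t'
| Jneg_rel u a b v : negw u -> S a.2 -> lneg a -> S b.2 -> lneg b -> negw v ->
    Jneg (relw u a b v).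

Lemma Jneg_bindc (f : wd -> comb wd) t : (forall p, p \in t -> Jneg (f p.2)) -> Jneg (bindc f t).
Proof. exact: (closed_bindc Jneg0 Jneg_cat Jneg_scale). Qed.

Lemma Jneg_coef0 t : (forall w, coef t w = 0) -> Jneg t.
Proof. exact: (closed_coef0 Jneg0 Jneg_coef). Qed.

Lemma Jneg_comb t (ts : seq (Cx * comb wd)) : (forall q, q \in ts -> Jneg q.2) ->
  (forall w, coef t w = \sum_(q <- ts) q.1 * coef q.2 w) -> Jneg t.
Proof. exact: (closed_comb Jneg0 Jneg_cat Jneg_scale Jneg_coef). Qed.

Lemma coef_lcons c t w : coef (lcons c t) w = \sum_(p <- t) p.1 * (c :: p.2 == w)%:R.
Proof. rewrite /lcons coef_bindc; apply: eq_bigr => p _; by rewrite coef1. Qed.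

Lemma coef_relw u a b v w : coef (relw u a b v) w =
  (u ++ a :: b :: v == w)%:R - (u ++ b :: a :: v == w)%:R
  - sc a b * (u ++ ladd a b :: v == w)%:R.
Proof.
rewrite /relw coef_cat !coef_cons coef_nil; have [k0|k0] := eqVneq (sc a b) 0.
  by rewrite k0 /= coef_nil; ring.
by rewrite /= coef_cons coef_nil /=; ring.
Qed.

Lemma coef_bindc_relw (f : wd -> comb wd) u a b v w : coef (bindc f (relw u a b v)) w =
  coef (f (u ++ a :: b :: v)) w - coef (f (u ++ b :: a :: v)) w
  - sc a b * coef (f (u ++ ladd a b :: v)) w.
Proof.
rewrite coef_bindc /relw big_cat !big_cons big_nil /=.
have [k0|k0] := eqVneq (sc a b) 0.
  by rewrite k0 big_nil; ring.
by rewrite big_cons big_nil /=; ring.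
Qed.

Lemma Jneg_lcons c t : S c.2 -> lneg c -> Jneg t -> Jneg (lcons c t).
Proof.
move=> Sc nc; elim=> {t}.
- exact: Jneg0.
- move=> t1 t2 _ H1 _ H2; rewrite /lcons bindc_cat; exact: Jneg_cat.
- move=> k t _ H; apply: (Jneg_coef (Jneg_scale k H)) => w; by rewrite bindc_scalec.
- move=> t t' _ H e; apply: (Jneg_coef H); exact: bindc_coef_eq.
- move=> u a b v Nu Sa na Sb nb Nv.
  apply: (Jneg_coef (Jneg_rel (u := c :: u) _ Sa na Sb nb Nv)).
    by move=> x; rewrite inE => /orP [/eqP ->|/Nu].
  move=> w; rewrite coef_lcons coef_relw /relw big_cat !big_cons big_nil /=.
  have [k0|k0] := eqVneq (sc a b) 0.
    by rewrite k0 /= big_nil /=; ring.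
  by rewrite /= big_cons big_nil /=; ring.
Qed.

Lemma actw_neg l w : lneg l -> actw l w = [:: (1, l :: w)].
Proof. by rewrite /actw => ->. Qed.

Lemma actw_nil l : ~~ lneg l -> actw l [::] = [::].
Proof. by rewrite /actw => /negbTE ->. Qed.

Lemma actw_cons l c w : ~~ lneg l -> actw l (c :: w) = lcons c (actw l w) ++
  (if sc l c == 0 then [::] else scalec (sc l c) (actw (ladd l c) w)).
Proof. by rewrite /actw => /negbTE -> /=. Qed.

Lemma coef_actw_cons l c w w0 : ~~ lneg l -> coef (actw l (c :: w)) w0 =
  coef (lcons c (actw l w)) w0 + sc l c * coef (actw (ladd l c) w) w0.
Proof.
move=> nl; rewrite actw_cons // coef_cat; have [k0|k0] := eqVneq (sc l c) 0.
  by rewrite k0 /= coef_nil mul0r.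
by rewrite /= coef_scalec.
Qed.

Lemma coef_act1 l x w : coef (act l [:: (1, x)]) w = coef (actw l x) w.
Proof. by rewrite /act coef_bindc big_cons big_nil mul1r addr0. Qed.

Lemma coef_act l t w : coef (act l t) w = \sum_(p <- t) p.1 * coef (actw l p.2) w.
Proof. exact: coef_bindc. Qed.

Lemma negc_lcons c t : S c.2 -> lneg c -> negc t -> negc (lcons c t).
Proof.
move=> Sc nc Nt; apply: mem_bindc => q qt p; rewrite inE => /eqP -> x /=.
rewrite inE => /orP [/eqP ->|]; first by [].
by apply: Nt.
Qed.

Lemma negc_actw w l : negw w -> S l.2 -> negc (actw l w).
Proof.
elim: w l => [|c w IH] l Nw Sl.
  rewrite /actw; case: ifP => nl p /=; last by rewrite in_nil.
  rewrite inE => /eqP -> x /=.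
  by rewrite inE => /eqP ->.
have Nc : S c.2 /\ lneg c by apply: Nw; rewrite inE eqxx.
have Nw' : negw w by move=> x xw; apply: Nw; rewrite inE xw orbT.
case nl: (lneg l).
  rewrite actw_neg // => p; rewrite inE => /eqP -> x /=.
  rewrite inE => /orP [/eqP ->|]; first by [].
  by apply: Nw.
rewrite actw_cons ?nl // => p; rewrite mem_cat => /orP [].
  apply: negc_lcons; [by case: Nc|by case: Nc|exact: IH].
have [k0|k0] := eqVneq (sc l c) 0; first by [].
move=> /mem_scalec [q qr ->]; move: q qr.
apply: IH => //; rewrite /ladd /=; apply: C_closed => //; by case: Nc.
Qed.

Lemma negc_act l t : S l.2 -> negc t -> negc (act l t).
Proof. move=> Sl Nt; apply: mem_bindc => q /Nt Nq; exact: negc_actw. Qed.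

Lemma C_prod_anti x y z : S x -> S y -> S z ->
  C x y * C (x + y) z = - (C x y * C z (x + y)).
Proof.
move=> Sx Sy Sz; case: (C x y =P 0) => [->|/eqP nz]; first by rewrite !mul0r oppr0.
by rewrite (C_anti (C_closed Sx Sy nz) Sz) mulrN.
Qed.

Lemma sc_jacobi l a b : S l.2 -> S a.2 -> S b.2 ->
  sc l a * sc (ladd l a) b - sc l b * sc (ladd l b) a - sc a b * sc l (ladd a b) = 0.
Proof.
rewrite /sc /ladd /= => Sl Sa Sb.
rewrite (C_prod_anti Sl Sa Sb) (C_prod_anti Sl Sb Sa) (C_anti Sl Sb).
have := C_jacobi Sl Sa Sb; rewrite (addrC b.2 l.2) (addrC l.2 a.2).
move=> H; rewrite -[RHS]oppr0 -H; ring.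
Qed.

Lemma sc_jacobi_anti a b c : S a.2 -> S b.2 -> S c.2 ->
  sc a c * sc (ladd a c) b + sc b c * sc a (ladd b c) - sc a b * sc (ladd a b) c = 0.
Proof.
move=> Sa Sb Sc; rewrite -[RHS](sc_jacobi Sa Sc Sb) /sc /ladd /=.
by rewrite (C_anti Sb Sc) (addrC b.2 c.2) mulNr addrAC.
Qed.

Lemma coef_lcons_defect c X Y k Z w :
  coef (lcons c (defect X Y k Z)) w = coef (lcons c X) w - coef (lcons c Y) w - k * coef (lcons c Z) w.
Proof. exact: coef_bindc_defect. Qed.

Lemma coef_act_defect l X Y k Z w :
  coef (act l (defect X Y k Z)) w = coef (act l X) w - coef (act l Y) w - k * coef (act l Z) w.
Proof. exact: coef_bindc_defect. Qed.

Lemma Jneg_all_cons (q : Cx * comb wd) ts : Jneg q.2 -> (forall q', q' \in ts -> Jneg q'.2) ->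
  forall q', q' \in q :: ts -> Jneg q'.2.
Proof. by move=> Hq Hts q'; rewrite inE => /orP [/eqP ->|/Hts]. Qed.

Lemma Jneg_all_nil : forall q : Cx * comb wd, q \in [::] -> Jneg q.2.
Proof. by []. Qed.

Lemma Jneg_scale_if k t : (k != 0 -> Jneg t) -> Jneg (scalec k t).
Proof.
have [->|k0] := eqVneq k 0 => H; last by apply: Jneg_scale; apply: H.
by apply: Jneg_coef0 => w; rewrite coef_scalec mul0r.
Qed.

Lemma negw_cons c w : negw (c :: w) <-> (S c.2 /\ lneg c) /\ negw w.
Proof.
split.
  move=> H; split; first by apply: H; rewrite inE eqxx.
  by move=> x xw; apply: H; rewrite inE xw orbT.
by case=> Hc Hw x; rewrite inE => /orP [/eqP ->|/Hw].
Qed.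

Lemma negw_cat u v : negw u -> negw v -> negw (u ++ v).
Proof. by move=> Hu Hv x; rewrite mem_cat => /orP [/Hu|/Hv]. Qed.

Lemma negc_relw u a b v : negw u -> S a.2 -> lneg a -> S b.2 -> lneg b -> negw v ->
  negc (relw u a b v).
Proof.
move=> Nu Sa na Sb nb Nv p; rewrite /relw mem_cat => /orP [].
  rewrite !inE => /orP [] /eqP -> /=; apply: negw_cat => //;
  by do 2! (apply/negw_cons; split => //).
have [k0|k0] := eqVneq (sc a b) 0 => //.
rewrite inE => /eqP -> /=; apply: negw_cat => //; apply/negw_cons; split => //.
split; [exact: C_closed|exact: lneg_ladd].
Qed.

Lemma Jneg_actw_cons l c w : S l.2 -> S c.2 -> lneg c -> negw w ->
  Jneg (defect (actw l (c :: w)) (lcons c (actw l w)) (sc l c) (actw (ladd l c) w)).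
Proof.
move=> Sl Sc nc Nw; case nl: (lneg l); last first.
  apply: Jneg_coef0 => w0; rewrite coef_defect coef_actw_cons ?nl //; ring.
apply: (Jneg_coef (Jneg_rel (u := [::]) _ Sl nl Sc nc Nw)) => // w0.
rewrite coef_relw coef_defect !actw_neg ?lneg_ladd // !coef1 coef_lcons big_cons big_nil /=.
ring.
Qed.

Lemma Jneg_scale_actw_cons k l c w : (k != 0 -> [/\ S l.2, S c.2, lneg c & negw w]) ->
  Jneg (scalec k (defect (actw l (c :: w)) (lcons c (actw l w)) (sc l c) (actw (ladd l c) w))).
Proof. move=> H; apply: Jneg_scale_if => /H [*]; exact: Jneg_actw_cons. Qed.

Lemma coef_act_lcons l c t w :
  coef (act l (lcons c t)) w = \sum_(p <- t) p.1 * coef (actw l (c :: p.2)) w.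
Proof.
rewrite /act /lcons bindc_comp coef_bindc; apply: eq_bigr => p _.
by rewrite coef_bindc big_cons big_nil mul1r addr0.
Qed.

Lemma coef_lcons_act c l t w :
  coef (lcons c (act l t)) w = \sum_(p <- t) p.1 * coef (lcons c (actw l p.2)) w.
Proof. by rewrite /act /lcons bindc_comp coef_bindc. Qed.

Lemma Jneg_act_lcons l c t : S l.2 -> S c.2 -> lneg c -> negc t ->
  Jneg (defect (act l (lcons c t)) (lcons c (act l t)) (sc l c) (act (ladd l c) t)).
Proof.
move=> Sl Sc nc Nt.
have HJ := Jneg_bindc (f := fun w => defect (actw l (c :: w)) (lcons c (actw l w)) (sc l c)
   (actw (ladd l c) w)) (t := t) (fun p pt => Jneg_actw_cons Sl Sc nc (Nt p pt)).
apply: (Jneg_coef HJ) => w; rewrite coef_defect coef_act_lcons coef_lcons_act !coef_act coef_bindc.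
rewrite mulr_sumr -!sumrB; apply: eq_bigr => p _; rewrite coef_defect; ring.
Qed.

Lemma coef_lcons_relw a b X w : coef (bindc (fun x => relw [::] a b x) X) w =
  coef (lcons a (lcons b X)) w - coef (lcons b (lcons a X)) w - sc a b * coef (lcons (ladd a b) X) w.
Proof.
rewrite /lcons !bindc_comp !coef_bindc mulr_sumr -!sumrB; apply: eq_bigr => p _.
rewrite coef_relw !coef_bindc !big_cons !big_nil /= !coef1 /=; ring.
Qed.

Lemma Jneg_act_relw_nil l a b v : S l.2 -> S a.2 -> lneg a -> S b.2 -> lneg b -> negw v ->
  Jneg (act l (relw [::] a b v)).
Proof.
move=> Sl Sa na Sb nb Nv.
have Nbv : negw (b :: v) by apply/negw_cons.
have Nav : negw (a :: v) by apply/negw_cons.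
set X := actw l v.
apply: (Jneg_comb (ts := [::
  (1, defect (actw l (a :: b :: v)) (lcons a (actw l (b :: v))) (sc l a) (actw (ladd l a) (b :: v)));
  (1, lcons a (defect (actw l (b :: v)) (lcons b (actw l v)) (sc l b) (actw (ladd l b) v)));
  (1, scalec (sc l a) (defect (actw (ladd l a) (b :: v)) (lcons b (actw (ladd l a) v)) (sc (ladd l a) b) (actw (ladd (ladd l a) b) v)));
  (-1, defect (actw l (b :: a :: v)) (lcons b (actw l (a :: v))) (sc l b) (actw (ladd l b) (a :: v)));
  (-1, lcons b (defect (actw l (a :: v)) (lcons a (actw l v)) (sc l a) (actw (ladd l a) v)));
  (-1, scalec (sc l b) (defect (actw (ladd l b) (a :: v)) (lcons a (actw (ladd l b) v)) (sc (ladd l b) a) (actw (ladd (ladd l b) a) v)));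
  (-1, scalec (sc a b) (defect (actw l (ladd a b :: v)) (lcons (ladd a b) (actw l v)) (sc l (ladd a b)) (actw (ladd l (ladd a b)) v)));
  (1, bindc (fun x => relw [::] a b x) X)])).
- apply: Jneg_all_cons; first exact: Jneg_actw_cons.
  apply: Jneg_all_cons; first by apply: Jneg_lcons => //; apply: Jneg_actw_cons.
  apply: Jneg_all_cons; first by apply: Jneg_scale_actw_cons => k0; split => //; apply: C_closed.
  apply: Jneg_all_cons; first exact: Jneg_actw_cons.
  apply: Jneg_all_cons; first by apply: Jneg_lcons => //; apply: Jneg_actw_cons.
  apply: Jneg_all_cons; first by apply: Jneg_scale_actw_cons => k0; split => //; apply: C_closed.
  apply: Jneg_all_cons; first by apply: Jneg_scale_actw_cons => k0; split => //; [exact: C_closed|exact: lneg_ladd].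
  apply: Jneg_all_cons; last exact: Jneg_all_nil.
  apply: Jneg_bindc => p pX; apply: Jneg_rel => //; exact: (negc_actw Nv Sl pX).
- move=> w; rewrite !big_cons big_nil /= /act coef_bindc_relw /=.
  rewrite !coef_defect !coef_scalec !coef_defect !coef_lcons_defect coef_lcons_relw.
  rewrite -/X (laddAC l b a) -(laddA l a b).
  apply/eqP; rewrite -subr_eq0; apply/eqP.
  have Hj := sc_jacobi Sl Sa Sb.
  transitivity ((sc l a * sc (ladd l a) b - sc l b * sc (ladd l b) a -
    sc a b * sc l (ladd a b)) * coef (actw (ladd l (ladd a b)) v) w).
    ring.
  by rewrite Hj mul0r.
Qed.

Lemma Jneg_act_relw l u a b v : S l.2 -> negw u -> S a.2 -> lneg a -> S b.2 -> lneg b ->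
  negw v -> Jneg (act l (relw u a b v)).
Proof.
move=> + + Sa na Sb nb Nv; elim: u l => [|u1 u IH] l Sl Nu; first exact: Jneg_act_relw_nil.
case/negw_cons: Nu => [[Su1 nu1] Nu'].
have NG := negc_relw Nu' Sa na Sb nb Nv.
set G := relw u a b v.
have eG : coef (lcons u1 G) =1 coef (relw (u1 :: u) a b v).
  move=> w; rewrite coef_lcons coef_relw /G /relw big_cat !big_cons big_nil /=.
  have [k0|k0] := eqVneq (sc a b) 0.
    by rewrite k0 /= big_nil /=; ring.
  by rewrite /= big_cons big_nil /=; ring.
apply: (Jneg_comb (ts := [::
  (1, defect (act l (lcons u1 G)) (lcons u1 (act l G)) (sc l u1) (act (ladd l u1) G));
  (1, lcons u1 (act l G)); (1, scalec (sc l u1) (act (ladd l u1) G))])).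
+ apply: Jneg_all_cons; first exact: Jneg_act_lcons.
  apply: Jneg_all_cons; first by apply: Jneg_lcons => //; apply: IH.
  apply: Jneg_all_cons; last exact: Jneg_all_nil.
  by apply: Jneg_scale_if => k0; apply: IH => //; apply: C_closed.
+ move=> w; rewrite !big_cons big_nil /= -(bindc_coef_eq (actw l) eG w).
  rewrite coef_defect coef_scalec; ring.
Qed.

Lemma Jneg_act l t : S l.2 -> Jneg t -> Jneg (act l t).
Proof.
move=> Sl; elim=> {t}.
- exact: Jneg0.
- move=> t1 t2 _ H1 _ H2; rewrite /act bindc_cat; exact: Jneg_cat.
- move=> k t _ H; apply: (Jneg_coef (Jneg_scale k H)) => w; by rewrite bindc_scalec.
- move=> t t' _ H e; apply: (Jneg_coef H); exact: bindc_coef_eq.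
- move=> u a b v Nu Sa na Sb nb Nv; exact: Jneg_act_relw.
Qed.

Lemma Jneg_actw_comm_nil a b : S a.2 -> S b.2 ->
  Jneg (defect (act a (actw b [::])) (act b (actw a [::])) (sc a b) (actw (ladd a b) [::])).
Proof.
move=> Sa Sb; case na: (lneg a); case nb: (lneg b).
- apply: (Jneg_coef (Jneg_rel (u := [::]) (v := [::]) _ Sa na Sb nb _)) => // w0.
  rewrite coef_relw coef_defect !actw_neg ?lneg_ladd // !coef_act1 !actw_neg // !coef1 /=; ring.
- apply: Jneg_coef0 => w0; rewrite coef_defect (actw_nil (l := b)) ?nb // actw_neg //.
  rewrite coef_act1 coef_actw_cons ?nb // coef_lcons actw_nil ?nb // big_nil.
  rewrite /act bindc_nil coef_nil (laddC b a) /sc (C_anti Sb Sa); ring.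
- apply: Jneg_coef0 => w0; rewrite coef_defect (actw_nil (l := a)) ?na // actw_neg //.
  rewrite coef_act1 coef_actw_cons ?na // coef_lcons actw_nil ?na // big_nil.
  rewrite /act bindc_nil coef_nil; ring.
- apply: Jneg_coef0 => w0; rewrite coef_defect !actw_nil ?na ?nb ?nlneg_ladd ?na ?nb //.
  by rewrite /act bindc_nil coef_nil; ring.
Qed.

Lemma Jneg_actw_comm w a b : negw w -> S a.2 -> S b.2 ->
  Jneg (defect (act a (actw b w)) (act b (actw a w)) (sc a b) (actw (ladd a b) w)).
Proof.
elim: w a b => [|c w IH] a b Nw Sa Sb; first exact: Jneg_actw_comm_nil.
case/negw_cons: Nw => [[Sc nc] Nw'].
have NTa := negc_actw Nw' Sa; have NTb := negc_actw Nw' Sb.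
apply: (Jneg_comb (ts := [::
  (1, act a (defect (actw b (c :: w)) (lcons c (actw b w)) (sc b c) (actw (ladd b c) w)));
  (1, defect (act a (lcons c (actw b w))) (lcons c (act a (actw b w))) (sc a c) (act (ladd a c) (actw b w)));
  (-1, act b (defect (actw a (c :: w)) (lcons c (actw a w)) (sc a c) (actw (ladd a c) w)));
  (-1, defect (act b (lcons c (actw a w))) (lcons c (act b (actw a w))) (sc b c) (act (ladd b c) (actw a w)));
  (-1, scalec (sc a b) (defect (actw (ladd a b) (c :: w)) (lcons c (actw (ladd a b) w)) (sc (ladd a b) c) (actw (ladd (ladd a b) c) w)));
  (1, lcons c (defect (act a (actw b w)) (act b (actw a w)) (sc a b) (actw (ladd a b) w)));
  (1, scalec (sc a c) (defect (act (ladd a c) (actw b w)) (act b (actw (ladd a c) w)) (sc (ladd a c) b) (actw (ladd (ladd a c) b) w)));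
  (1, scalec (sc b c) (defect (act a (actw (ladd b c) w)) (act (ladd b c) (actw a w)) (sc a (ladd b c)) (actw (ladd a (ladd b c)) w)))])).
- apply: Jneg_all_cons; first by apply: Jneg_act => //; apply: Jneg_actw_cons.
  apply: Jneg_all_cons; first exact: Jneg_act_lcons.
  apply: Jneg_all_cons; first by apply: Jneg_act => //; apply: Jneg_actw_cons.
  apply: Jneg_all_cons; first exact: Jneg_act_lcons.
  apply: Jneg_all_cons; first by apply: Jneg_scale_actw_cons => k0; split => //; apply: C_closed.
  apply: Jneg_all_cons; first by apply: Jneg_lcons => //; apply: IH.
  apply: Jneg_all_cons; first by apply: Jneg_scale_if => k0; apply: IH => //; apply: C_closed.
  apply: Jneg_all_cons; last exact: Jneg_all_nil.
  by apply: Jneg_scale_if => k0; apply: IH => //; apply: C_closed.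
- move=> w0; rewrite !big_cons big_nil /=.
  rewrite !coef_defect !coef_scalec !coef_act_defect !coef_defect !coef_lcons_defect.
  rewrite (laddAC a c b) -(laddA a b c).
  have Hj := sc_jacobi_anti Sa Sb Sc.
  apply/eqP; rewrite -subr_eq0; apply/eqP.
  transitivity ((sc a c * sc (ladd a c) b + sc b c * sc a (ladd b c) -
    sc a b * sc (ladd a b) c) * coef (actw (ladd a (ladd b c)) w) w0).
    ring.
  by rewrite Hj mul0r.
Qed.

Lemma Jneg_act_comm a b t : S a.2 -> S b.2 -> negc t ->
  Jneg (defect (act a (act b t)) (act b (act a t)) (sc a b) (act (ladd a b) t)).
Proof.
move=> Sa Sb Nt.
have HJ := Jneg_bindc (f := fun w => defect (act a (actw b w)) (act b (actw a w)) (sc a b)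
   (actw (ladd a b) w)) (t := t) (fun p pt => Jneg_actw_comm (Nt p pt) Sa Sb).
apply: (Jneg_coef HJ) => w; rewrite coef_defect /act !bindc_comp -/(act _ _) !coef_bindc.
rewrite mulr_sumr -!sumrB; apply: eq_bigr => p _; rewrite coef_defect; ring.
Qed.

Definition act_seq (b : wd) (t : comb wd) : comb wd := foldr act t b.
Definition vacuum : comb wd := [:: (1, [::])].
Definition vac (w : wd) : comb wd := act_seq w vacuum.
Definition onS (w : wd) : Prop := forall x, x \in w -> S x.2.

Lemma act_seq_cat b1 b2 t : act_seq (b1 ++ b2) t = act_seq b1 (act_seq b2 t).
Proof. by rewrite /act_seq foldr_cat. Qed.

Lemma act_seq_nil b : act_seq b [::] = [::].
Proof. by elim: b => //= l b ->. Qed.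

Lemma act_seq_defect b X Y k Z :
  coef (act_seq b (defect X Y k Z)) =1 coef (defect (act_seq b X) (act_seq b Y) k (act_seq b Z)).
Proof.
elim: b => //= l b IH w.
by rewrite (bindc_coef_eq _ IH w) -/(act _ _) coef_act_defect coef_defect.
Qed.

Lemma onS_cons c w : onS (c :: w) <-> S c.2 /\ onS w.
Proof.
split.
  move=> H; split; first by apply: H; rewrite inE eqxx.
  by move=> x xw; apply: H; rewrite inE xw orbT.
by case=> Hc Hw x; rewrite inE => /orP [/eqP ->|/Hw].
Qed.

Lemma Jneg_act_seq b t : onS b -> Jneg t -> Jneg (act_seq b t).
Proof.
elim: b => //= l b IH /onS_cons [Sl Sb] Jt; apply: Jneg_act => //; exact: IH.
Qed.

Lemma negc_act_seq b t : onS b -> negc t -> negc (act_seq b t).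
Proof.
elim: b => //= l b IH /onS_cons [Sl Sb] Nt; apply: negc_act => //; exact: IH.
Qed.

Lemma negc_vacuum : negc vacuum.
Proof. by move=> p; rewrite inE => /eqP -> x. Qed.

Lemma Jneg_vac_relw b x y c : onS b -> onS c -> S x.2 -> S y.2 -> Jneg (bindc vac (relw b x y c)).
Proof.
move=> Sb Sc Sx Sy.
have HJ := Jneg_act_seq Sb (Jneg_act_comm Sx Sy (negc_act_seq Sc negc_vacuum)).
apply: (Jneg_coef HJ) => w; rewrite act_seq_defect coef_defect coef_bindc_relw /vac !act_seq_cat /=.
by [].
Qed.

Definition homneg (d : int) (ne : bool) (t : comb wd) : Prop :=
  forall p, p \in t -> [/\ all lneg p.2, deg p.2 = d & (ne -> p.2 != [::])].

Lemma homneg_actw l w : all lneg w -> homneg (deg w + l.1) true (actw l w).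
Proof.
elim: w l => [|c w IH] l nw.
  case nl: (lneg l); last by rewrite actw_nil ?nl.
  rewrite actw_neg // => p; rewrite inE => /eqP -> /=; split => //.
    by rewrite nl.
  by rewrite deg_cons /deg big_nil; ring.
move: (nw) => /= /andP [nc nw'].
case nl: (lneg l).
  rewrite actw_neg // => p; rewrite inE => /eqP -> /=; split => //.
    by rewrite nl nc.
  rewrite !deg_cons; ring.
rewrite actw_cons ?nl // => p; rewrite mem_cat => /orP [].
  move: p; apply: (mem_bindc (P := fun x => [/\ all lneg x, deg x = deg (c :: w) + l.1 & (true -> x != [::])])).
  move=> q /(IH l nw') [q1 q2 q3] p; rewrite inE => /eqP -> /=; split => //.
    by rewrite nc.
  by rewrite !deg_cons q2; ring.
have [k0|k0] := eqVneq (sc l c) 0 => //.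
move=> /mem_scalec [q /(IH _ nw') [q1 q2 q3] ->]; split => //.
by rewrite q2 deg_cons /ladd /=; ring.
Qed.

Lemma homneg_act_seq b d ne t : homneg d ne t ->
  homneg (deg b + d) (ne || (b != [::])) (act_seq b t).
Proof.
elim: b => [|l b IH] Ht /=.
  by rewrite /deg big_nil add0r orbF.
move=> p; apply: (mem_bindc (P := fun x => [/\ all lneg x, deg x = deg (l :: b) + d & (ne || true -> x != [::])])).
move=> q /(IH Ht) [q1 q2 q3] p' /(homneg_actw (l := l) q1) [p1 p2 p3]; split => //.
  by rewrite p2 q2 deg_cons; ring.
by move=> _; apply: p3.
Qed.

Lemma homneg_vacuum : homneg 0 false vacuum.
Proof. by move=> p; rewrite inE => /eqP -> /=; split => //; rewrite /deg big_nil. Qed.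

Lemma homneg_nonneg_nil d t : 0 <= d -> homneg d true t -> t = [::].
Proof.
case: t => [//|p t] d0 H; case: (H p (mem_head _ _)) => p1 p2 p3.
have := deg_neg_le p1 (p3 isT); rewrite p2; move: d0; lia.
Qed.

(* The nonnegative suffix of the word, acting on the vacuum, could only
   produce negative words of nonnegative degree. *)
Lemma vac_Mplus w : Mplus w -> vac w = [::].
Proof.
case=> sz [i ilt si].
rewrite /vac -(cat_take_drop i w) act_seq_cat.
have dne : drop i w != [::].
  by rewrite -size_eq0 size_drop subn_eq0 -ltnNge.
have := homneg_act_seq (b := drop i w) homneg_vacuum; rewrite orFb dne addr0 => H.
by rewrite (homneg_nonneg_nil _ H) ?act_seq_nil.
Qed.

Lemma vac_neg w : all lneg w -> coef (vac w) =1 coef [:: (1, w)].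
Proof.
elim: w => [|l w IH] //= /andP [nl nw] x.
rewrite -/(act _ _) (bindc_coef_eq _ (IH nw)) coef_act1 actw_neg //.
Qed.

Local Notation series := (series A).

Lemma in_MS_onS (w : wd) : in_MS S w <-> onS w.
Proof. split=> H x /In_mem; exact: H. Qed.

Lemma inF_coef (t : comb wd) : (forall p, p \in t -> onS p.2) -> inF S (coef t).
Proof.
move=> H; split.
  move=> w /coef_supp /mapP [p pt ->]; apply/in_MS_onS; exact: H.
move=> j; exists (map snd t) => w /coef_supp ? _; done.
Qed.

Lemma inF_ind (u : wd) : onS u -> inF S (ind u).
Proof.
move=> Su; have e : coef [:: (1, u)] =1 ind u by move=> w; rewrite coef1 /ind eq_sym.
split.
  move=> w; rewrite -e => /coef_supp; rewrite inE => /eqP ->; exact/in_MS_onS.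
move=> j; exists [:: u] => w; rewrite -e => /coef_supp //.
Qed.

Lemma inF_scale k (mu : series) : inF S mu -> inF S (fun w => k * mu w).
Proof.
case=> H1 H2; split.
  move=> w; rewrite mulf_eq0 negb_or => /andP [_ /H1] //.
move=> j; case: (H2 j) => s Hs; exists s => w; rewrite mulf_eq0 negb_or.
by move=> /andP [_ /Hs].
Qed.

Lemma inF_add (mu nu : series) : inF S mu -> inF S nu -> inF S (fun w => mu w + nu w).
Proof.
case=> H1 H2 [K1 K2]; split.
  move=> w Hw; case: (mu w =P 0) => [e|/eqP m0]; last exact: H1.
  apply: K1; by move: Hw; rewrite e add0r.
move=> j; case: (H2 j) => s1 Hs1; case: (K2 j) => s2 Hs2; exists (s1 ++ s2) => w Hw le.
rewrite mem_cat; case: (mu w =P 0) => [e|/eqP m0]; last by rewrite (Hs1 _ m0 le).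
by rewrite (Hs2 w) ?orbT //; move: Hw; rewrite e add0r.
Qed.

Lemma inF_restr (P : pred wd) (mu : series) : inF S mu -> inF S (fun w => if P w then mu w else 0).
Proof.
case=> H1 H2; split.
  by move=> w; case: (P w); [exact: H1|rewrite eqxx].
move=> j; case: (H2 j) => s Hs; exists s => w; case: (P w); first exact: Hs.
by rewrite eqxx.
Qed.

Lemma inI_ext (mu nu : series) : inI S C mu -> mu =1 nu -> inI S C nu.
Proof. move=> H e; have -> : nu = mu by apply: functional_extensionality => w; rewrite e. done. Qed.

Lemma inI_scale k (mu : series) : inI S C mu -> inI S C (fun w => k * mu w).
Proof.
elim=> {mu}.
- by apply: (inI_ext (inI0 S C)) => w; rewrite /szero mulr0.
- move=> m1 m2 _ H1 _ H2; apply: (inI_ext (inIadd H1 H2)) => w; rewrite /sadd; ring.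
- move=> u v al m be l Fu Fv Sal Sbe.
  apply: (inI_ext (inIgen C m l (inF_scale k Fu) Fv Sal Sbe)) => w.
  rewrite (smul_ext (smul_scalel k u (gen C al m be l)) (frefl v)) smul_scalel.
  done.
Qed.

Lemma gen_sum (a b : letter) : gen C a.2 a.1 b.2 b.1 =1 fun w =>
  \sum_(p <- [:: (1, [:: a; b]); (-1, [:: b; a]); (- sc a b, [:: ladd a b])]) p.1 * ind p.2 w.
Proof.
case: a => m al; case: b => l be w.
rewrite /gen !big_cons big_nil /= /sc /ladd /=; ring.
Qed.

Lemma smul_gen (u v : wd) (a b : letter) :
  smul (smul (ind u) (gen C a.2 a.1 b.2 b.1)) (ind v) =1 coef (relw u a b v).
Proof.
move=> w.
rewrite (smul_ext (smul_ext (frefl (ind u)) (gen_sum a b)) (frefl _) w).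
rewrite (smul_ext (smul_sumr _ _ _) (frefl _) w) (smul_suml _ (fun x => smul (ind u) (ind x))) !big_cons big_nil /=.
rewrite !smul_ind3 coef_relw /ind /= ![w == _]eq_sym; ring.
Qed.

Lemma negw_onS (w : wd) : negw w -> onS w.
Proof. by move=> H x /H []. Qed.

Definition inIc (t : comb wd) : Prop := inI S C (coef t).

Lemma inIc0 : inIc [::].
Proof. by apply: (inI_ext (inI0 S C)) => w; rewrite coef_nil. Qed.

Lemma inIc_cat t1 t2 : inIc t1 -> inIc t2 -> inIc (t1 ++ t2).
Proof. move=> H1 H2; apply: (inI_ext (inIadd H1 H2)) => w; by rewrite coef_cat. Qed.

Lemma inIc_scale k t : inIc t -> inIc (scalec k t).
Proof. move=> H; apply: (inI_ext (inI_scale k H)) => w; by rewrite coef_scalec. Qed.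

Lemma inIc_coef t t' : inIc t -> coef t =1 coef t' -> inIc t'.
Proof. move=> H e; exact: (inI_ext H e). Qed.

Lemma inIc_comb t (ts : seq (Cx * comb wd)) : (forall q, q \in ts -> inIc q.2) ->
  (forall w, coef t w = \sum_(q <- ts) q.1 * coef q.2 w) -> inIc t.
Proof. exact: (closed_comb inIc0 inIc_cat inIc_scale inIc_coef). Qed.

Lemma inIc_all_cons (q : Cx * comb wd) ts : inIc q.2 -> (forall q', q' \in ts -> inIc q'.2) ->
  forall q', q' \in q :: ts -> inIc q'.2.
Proof. by move=> Hq Hts q'; rewrite inE => /orP [/eqP ->|/Hts]. Qed.

Lemma inIc_relw p x y q : onS p -> onS q -> S x.2 -> S y.2 -> inIc (relw p x y q).
Proof.
move=> Sp Sq Sx Sy.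
apply: (inI_ext (inIgen C x.1 y.1 (inF_ind Sp) (inF_ind Sq) Sx Sy)).
exact: smul_gen.
Qed.

Lemma Jneg_inIc t : Jneg t -> inIc t.
Proof.
elim=> {t}; [exact: inIc0 | by move=> *; apply: inIc_cat | by move=> *; apply: inIc_scale |
  by move=> t t' _ H; apply: inIc_coef H |].
by move=> u a b v Nu Sa _ Sb _ Nv; apply: inIc_relw => //; apply: negw_onS.
Qed.

Definition vac_sum (s : seq wd) (mu : series) : comb wd :=
  flatten [seq scalec (mu w) (vac w) | w <- s].

Lemma coef_vac_sum s mu w0 : coef (vac_sum s mu) w0 = \sum_(w <- s) mu w * coef (vac w) w0.
Proof. by rewrite /vac_sum coef_flatten big_map; apply: eq_bigr => w _; rewrite coef_scalec. Qed.

Definition covers (s : seq wd) (mu : series) : Prop :=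
  forall w, mu w != 0 -> ~~ Mplusb w -> w \in s.

Lemma vac_sum_filter s mu w0 : \sum_(w <- s) mu w * coef (vac w) w0 =
  \sum_(w <- filter (fun w => (mu w != 0) && ~~ Mplusb w) s) mu w * coef (vac w) w0.
Proof.
rewrite big_filter [RHS]big_mkcond /=; apply: eq_bigr => w _.
case: (mu w =P 0) => [->|_] /=; first by rewrite mul0r.
case: (MplusP w) => [/vac_Mplus ->|_] /=; last by [].
by rewrite coef_nil mulr0.
Qed.

Lemma vac_sum_indep s1 s2 mu : uniq s1 -> uniq s2 -> covers s1 mu -> covers s2 mu ->
  coef (vac_sum s1 mu) =1 coef (vac_sum s2 mu).
Proof.
move=> u1 u2 c1 c2 w0; rewrite !coef_vac_sum (vac_sum_filter s1) (vac_sum_filter s2).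
apply: perm_big; apply: uniq_perm; rewrite ?filter_uniq // => w.
rewrite !mem_filter; case P: ((mu w != 0) && ~~ Mplusb w) => //=.
case/andP: P => m0 nm; by rewrite (c1 _ m0 nm) (c2 _ m0 nm).
Qed.

(* Since words of M(S)_+ kill
   the vacuum, the sum runs over any finite list containing the support of
   [mu] outside M(S)_+, which is finite for [mu] in F(S). *)
Definition vac_null (mu : series) : Prop :=
  exists s, [/\ uniq s, covers s mu & Jneg (vac_sum s mu)].

Lemma vac_null_covers mu s : vac_null mu -> uniq s -> covers s mu -> Jneg (vac_sum s mu).
Proof.
case=> s0 [u0 c0 J0'] us cs; apply: (Jneg_coef J0'); exact: vac_sum_indep.
Qed.

Lemma vac_null_ext (mu nu : series) : mu =1 nu -> vac_null mu -> vac_null nu.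
Proof.
move=> e [s [us cs Js]]; exists s; split => //.
  by move=> w; rewrite -e; apply: cs.
apply: (Jneg_coef Js) => w0; rewrite !coef_vac_sum; apply: eq_bigr => w _; by rewrite e.
Qed.

Lemma vac_null_Mplus (mu : series) : (forall w, mu w != 0 -> Mplusb w) -> vac_null mu.
Proof.
move=> H; exists [::]; split => //; last exact: Jneg0.
by move=> w /H ->.
Qed.

Lemma vac_null_add (mu nu : series) : vac_null mu -> vac_null nu -> vac_null (fun w => mu w + nu w).
Proof.
move=> Hm Hn; case: (Hm) => s1 [u1 c1 _]; case: (Hn) => s2 [u2 c2 _].
set s := undup (s1 ++ s2).
have us : uniq s by apply: undup_uniq.
have cm : covers s mu by move=> w m0 nm; rewrite mem_undup mem_cat (c1 _ m0 nm).
have cn : covers s nu by move=> w m0 nm; rewrite mem_undup mem_cat (c2 _ m0 nm) orbT.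
exists s; split => //.
  move=> w H nm; case: (mu w =P 0) => [e|/eqP m0]; last exact: cm.
  by apply: cn => //; move: H; rewrite e add0r.
apply: (Jneg_coef (Jneg_cat (vac_null_covers Hm us cm) (vac_null_covers Hn us cn))) => w0.
rewrite coef_cat !coef_vac_sum -big_split; apply: eq_bigr => w _ /=; ring.
Qed.

Lemma vac_null_scale k (mu : series) : vac_null mu -> vac_null (fun w => k * mu w).
Proof.
case=> s [us cs Js]; exists s; split => //.
  by move=> w; rewrite mulf_eq0 negb_or => /andP [_ /cs].
apply: (Jneg_coef (Jneg_scale k Js)) => w0; rewrite coef_scalec !coef_vac_sum mulr_sumr.
apply: eq_bigr => w _; ring.
Qed.

Lemma vac_null_sum (I : eqType) (ts : seq (Cx * I)) (F : I -> series) :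
  (forall p, p \in ts -> vac_null (F p.2)) ->
  vac_null (fun w => \sum_(p <- ts) p.1 * F p.2 w).
Proof.
elim: ts => [|p ts IH] H.
  by apply: vac_null_Mplus => w; rewrite big_nil eqxx.
apply: (vac_null_ext (mu := fun w => p.1 * F p.2 w + \sum_(q <- ts) q.1 * F q.2 w)).
  by move=> w; rewrite big_cons.
apply: vac_null_add; first by apply: vac_null_scale; apply: H; rewrite mem_head.
by apply: IH => q qt; apply: H; rewrite inE qt orbT.
Qed.

Lemma vac_null_coef (t : comb wd) : Jneg (bindc vac t) -> vac_null (coef t).
Proof.
move=> Jt; set s := undup (map snd t).
have us : uniq s by apply: undup_uniq.
exists s; split => //.
  by move=> w /coef_supp ws _; rewrite mem_undup.
apply: (Jneg_coef Jt) => w0; rewrite coef_vac_sum coef_bindc.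
rewrite (sum_coef (fun x => coef (vac x) w0) us) //.
by move=> p pt; rewrite mem_undup; apply: map_f.
Qed.

Lemma gen_deg al m be l (z : wd) : gen C al m be l z != 0 -> deg z = m + l.
Proof.
rewrite /gen /ind.
case: (z =P [:: (m, al); (l, be)]) => [->|_]; first by move=> _; rewrite /deg !big_cons big_nil /=; ring.
case: (z =P [:: (l, be); (m, al)]) => [->|_]; first by move=> _; rewrite /deg !big_cons big_nil /=; ring.
case: (z =P [:: (m + l, al + be)]) => [->|_]; first by move=> _; rewrite /deg !big_cons big_nil /=; ring.
by rewrite /= subrr mulr0 subr0 eqxx.
Qed.

Lemma inF_onS (mu : series) w : inF S mu -> mu w != 0 -> onS w.
Proof. by case=> H _ /H /in_MS_onS. Qed.

(* The bound [-1 - (m + l + deg c)] is chosen so that a suffix of the left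
   factor exceeding it yields a suffix of nonnegative sum in the product. *)
Lemma Mplus_smul_gen (u : series) al m be l (c w : wd) :
  (forall a, u a != 0 -> ~ word_le a (-1 - (m + l + deg c))) ->
  smul (smul u (gen C al m be l)) (ind c) w != 0 -> Mplusb w.
Proof.
move=> Hu /smul_supp [i [H1 H2]].
move: H2; rewrite /ind; case: (drop i w =P c) => [ed _|_]; last by rewrite eqxx.
case/smul_supp: H1 => i' [/Hu nle /gen_deg dz].
have [k kl kj] : exists2 k, (k < size (take i' (take i w)))%N &
    -1 - (m + l + deg c) < suffix_sum (take i' (take i w)) k.
  have : ~~ word_leb (take i' (take i w)) (-1 - (m + l + deg c)) by apply/word_leP.
  rewrite /word_leb -has_predC => /hasP [k]; rewrite mem_iota add0n => /andP [_ kl] /= kj.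
  by exists k => //; rewrite ltNge.
have hs : (size (take i' (take i w)) <= size w)%N.
  by rewrite !size_take_min; apply: leq_trans (geq_minr _ _) (geq_minr _ _).
apply/MplusP; split; first exact: leq_trans (leq_trans (ltn0Sn k) kl) hs.
exists k; first exact: leq_trans kl hs.
rewrite -(cat_take_drop i w) -(cat_take_drop i' (take i w)) -catA suffix_sum_cat //.
by rewrite deg_cat dz ed; move: kj; lia.
Qed.

Lemma inF_restr_coef (mu : series) (P : pred wd) j : inF S mu ->
  (forall w, P w -> word_le w j) ->
  exists2 t : comb wd, (forall q, q \in t -> onS q.2) &
    (fun w => if P w then mu w else 0) =1 coef t.
Proof.
move=> Fm HP; case: (Fm) => _ /(_ j) [s0 Hs0].
eexists; last by apply: (restr_coef (s := s0)) => w m0 /HP; apply: Hs0 m0.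
move=> q /mapP [w]; rewrite mem_filter => /andP [/andP [m0 _] _] -> /=.
exact: inF_onS Fm m0.
Qed.

Lemma vac_null_gen_ind (u : series) al m be l (c : wd) : inF S u -> S al -> S be -> onS c ->
  vac_null (smul (smul u (gen C al m be l)) (ind c)).
Proof.
move=> Fu Sal Sbe Sc.
set g := gen C al m be l; set j := -1 - (m + l + deg c).
set ug := fun w => if word_leb w j then 0 else u w.
have [tu Htu ef] := inF_restr_coef (P := fun w => word_leb w j) Fu (fun w => elimT (word_leP w j)).
have eu : u =1 fun w => coef tu w + ug w.
  by move=> w; rewrite -ef /ug /=; case: (word_leb w j); rewrite ?addr0 ?add0r.
apply: (vac_null_ext
  (mu := fun w => smul (smul (coef tu) g) (ind c) w + smul (smul ug g) (ind c) w)).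
  move=> w; rewrite (smul_ext (smul_ext eu (frefl g)) (frefl _) w).
  by rewrite (smul_ext (smul_addl (coef tu) ug g) (frefl _) w) smul_addl.
apply: vac_null_add.
  apply: (vac_null_ext (mu := fun w => \sum_(p <- tu) p.1 * smul (smul (ind p.2) g) (ind c) w)).
    move=> w; rewrite (smul_ext (smul_ext (coef_ind tu) (frefl g)) (frefl _) w).
    by rewrite (smul_ext (smul_suml _ _ _) (frefl _) w) (smul_suml _ (fun x => smul (ind x) g)).
  apply: (vac_null_sum (F := fun x => smul (smul (ind x) g) (ind c))) => p /Htu Sp.
  apply: (vac_null_ext (mu := coef (relw p.2 (m, al) (l, be) c))).
    by move=> w; rewrite -smul_gen.
  by apply: vac_null_coef; apply: Jneg_vac_relw.
apply: vac_null_Mplus => w; apply: Mplus_smul_gen => a.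
by rewrite /ug; case: word_leP => [_|nle _]; rewrite ?eqxx.
Qed.

Lemma vac_null_gen (u v : series) al m be l : inF S u -> inF S v -> S al -> S be ->
  vac_null (smul (smul u (gen C al m be l)) v).
Proof.
move=> Fu Fv Sal Sbe.
set X := smul u (gen C al m be l).
set vp := fun w => if ~~ Mplusb w then 0 else v w.
have [tv Htv ef] := inF_restr_coef Fv (@notMplusb_le A).
have ev : v =1 fun w => coef tv w + vp w.
  by move=> w; rewrite -ef /vp /=; case: (~~ Mplusb w); rewrite ?addr0 ?add0r.
apply: (vac_null_ext (mu := fun w => smul X (coef tv) w + smul X vp w)).
  by move=> w; rewrite (smul_ext (frefl X) ev w) smul_addr.
apply: vac_null_add.
  apply: (vac_null_ext (mu := fun w => \sum_(p <- tv) p.1 * smul X (ind p.2) w)).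
    by move=> w; rewrite (smul_ext (frefl X) (coef_ind tv) w) smul_sumr.
  apply: (vac_null_sum (F := fun x => smul X (ind x))) => p /Htv Sp.
  exact: vac_null_gen_ind.
apply: vac_null_Mplus => w /smul_supp [i [_ H]].
move: H; rewrite /vp; case: (MplusP (drop i w)) => [H _|_ /=]; last by rewrite eqxx.
by apply/MplusP; apply: Mplus_drop H.
Qed.

Lemma inI_vac_null (mu : series) : inI S C mu -> vac_null mu.
Proof.
elim=> {mu}.
- by apply: vac_null_Mplus => w; rewrite /szero eqxx.
- move=> m1 m2 _ H1 _ H2; exact: vac_null_add.
- move=> u v al m be l Fu Fv Sal Sbe; exact: vac_null_gen.
Qed.

Lemma inI_Mminus_sub_Mplus (mum mup : series) : inF S mum -> supp_in mum (@Mminus _) ->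
  inF S mup -> supp_in mup (@Mplus _) -> inI S C (ssub mum mup) -> inI S C mum.
Proof.
move=> Fm Mm Fp Mp /inI_vac_null HZ.
case: (Fm) => _ /(_ (-1)) [s0 Hs0].
set s := undup s0.
have us : uniq s by apply: undup_uniq.
have cs : covers s (ssub mum mup).
  move=> w H nm; rewrite mem_undup.
  have p0 : mup w = 0.
    by apply/eqP; apply: contraT => /Mp Hw; move: nm; rewrite (introT (MplusP w) Hw).
  have m0 : mum w != 0 by move: H; rewrite /ssub p0 subr0.
  exact: (Hs0 w m0 (Mminus_le (Mm w m0))).
have HJ := vac_null_covers HZ us cs.
apply: (inI_ext (Jneg_inIc HJ)) => w0; rewrite coef_vac_sum.
have -> : \sum_(w <- s) ssub mum mup w * coef (vac w) w0 =
          \sum_(w <- s) mum w * (w == w0)%:R.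
  apply: eq_bigr => w _; rewrite /ssub.
  case: (mup w =P 0) => [->|/eqP p0]; last first.
    rewrite (vac_Mplus (Mp w p0)) coef_nil mulr0.
    case: (mum w =P 0) => [->|/eqP m0]; first by rewrite mul0r.
    exfalso; have := Mm w m0; have := Mp w p0; case=> sz [i il si] Hm.
    have := Mminus_le Hm il; move: si; lia.
  rewrite subr0; case: (mum w =P 0) => [->|/eqP m0]; first by rewrite !mul0r.
  rewrite (vac_neg _) ?coef1 //; apply/allP => x xw; apply: (Mm w m0); exact/In_mem.
rewrite sum_pick //; case: ifP => // ws.
by apply/esym/eqP; apply: contraFT ws => m0; rewrite mem_undup (Hs0 w0 m0 (Mminus_le (Mm w0 m0))).
Qed.

Definition prefc (p : wd) (t : comb wd) : comb wd := [seq (q.1, p ++ q.2) | q <- t].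
Definition plusc (t : comb wd) : Prop := forall q, q \in t -> onS q.2 /\ Mplusb q.2.
(* [p ++ w] is straightened without touching its already processed prefix [p]. *)
Definition straightening (p w : wd) (tm tp : comb wd) : Prop :=
  [/\ negc tm, plusc tp & inIc (defect [:: (1, p ++ w)] (prefc p tm) 1 (prefc p tp))].

Lemma coef_prefc p t w : coef (prefc p t) w = \sum_(q <- t) q.1 * (p ++ q.2 == w)%:R.
Proof. by rewrite /coef big_map. Qed.

Lemma coef_prefc_rcons p c t w :
  coef (prefc (p ++ [:: c]) t) w = coef (prefc p [seq (q.1, c :: q.2) | q <- t]) w.
Proof. rewrite !coef_prefc big_map; apply: eq_bigr => q _ /=; by rewrite -catA. Qed.

Lemma coef_prefc_scale p k t w : coef (prefc p (scalec k t)) w = k * coef (prefc p t) w.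
Proof. by rewrite !coef_prefc /scalec big_map mulr_sumr; apply: eq_bigr => q _ /=; ring. Qed.

Lemma coef_prefc_cat p t1 t2 w : coef (prefc p (t1 ++ t2)) w = coef (prefc p t1) w + coef (prefc p t2) w.
Proof. by rewrite /prefc map_cat coef_cat. Qed.

Lemma onS_cat u v : onS u -> onS v -> onS (u ++ v).
Proof. by move=> Hu Hv x; rewrite mem_cat => /orP [/Hu|/Hv]. Qed.

Lemma plusc_cat t1 t2 : plusc t1 -> plusc t2 -> plusc (t1 ++ t2).
Proof. by move=> H1 H2 q; rewrite mem_cat => /orP [/H1|/H2]. Qed.

Lemma negc_cat t1 t2 : negc t1 -> negc t2 -> negc (t1 ++ t2).
Proof. by move=> H1 H2 q; rewrite mem_cat => /orP [/H1|/H2]. Qed.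

Lemma plusc_scale k t : plusc t -> plusc (scalec k t).
Proof. by move=> H q /mem_scalec [q' /H Hq ->]. Qed.

Lemma negc_scale k t : negc t -> negc (scalec k t).
Proof. by move=> H q /mem_scalec [q' /H Hq ->]. Qed.

Lemma plusc_cons c t : S c.2 -> plusc t -> plusc [seq (q.1, c :: q.2) | q <- t].
Proof.
move=> Sc H q /mapP [q' /H [Sq Mq] ->] /=; split; last exact: Mplusb_cons.
by apply/onS_cons.
Qed.

Lemma negc_cons c t : S c.2 -> lneg c -> negc t -> negc [seq (q.1, c :: q.2) | q <- t].
Proof. move=> Sc nc H q /mapP [q' /H Hq ->] /=; by apply/negw_cons. Qed.

Lemma straighten_nonneg (u : wd) : negw u -> forall p a, onS p -> S a.2 -> ~~ lneg a ->
  exists tm tp, straightening p (a :: u) tm tp.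
Proof.
elim: u => [|c u IH] Nu p a Sp Sa na.
  exists [::], [:: (1, [:: a])]; split => //.
    move=> q; rewrite inE => /eqP -> /=; split; first by move=> x; rewrite inE => /eqP ->.
    apply/MplusP; split => //; exists 0%N => //.
    by move: na; rewrite /suffix_sum /lneg drop0 big_cons big_nil /=; lia.
  apply: (inIc_comb (ts := [::])) => //= w.
  by rewrite coef_defect /prefc /= coef_nil !coef1; rewrite big_nil; ring.
case/negw_cons: Nu => [[Sc nc] Nu].
have Spc : onS (p ++ [:: c]) by apply: onS_cat => // x; rewrite inE => /eqP ->.
case: (IH Nu (p ++ [:: c]) a Spc Sa na) => tm1 [tp1 [N1 G1 I1]].
have Igen := inIc_relw Sp (negw_onS Nu) Sa Sc (x := a) (y := c).
have [k0|k0] := eqVneq (sc a c) 0.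
  exists [seq (q.1, c :: q.2) | q <- tm1], [seq (q.1, c :: q.2) | q <- tp1]; split.
  - exact: negc_cons.
  - exact: plusc_cons.
  apply: (inIc_comb (ts := [:: (1, relw p a c u); (1, defect [:: (1, (p ++ [:: c]) ++ a :: u)]
       (prefc (p ++ [:: c]) tm1) 1 (prefc (p ++ [:: c]) tp1))])).
    apply: inIc_all_cons => //; apply: inIc_all_cons => //.
  move=> w; rewrite !big_cons big_nil /= !coef_defect coef_relw k0 !coef1 !coef_prefc_rcons -catA /=.
  ring.
have [tm2 [tp2 [N2 G2 I2]]] : exists tm2 tp2, straightening p (ladd a c :: u) tm2 tp2.
  have Sac : S (ladd a c).2 by apply: C_closed.
  case nac: (lneg (ladd a c)).
    exists [:: (1, ladd a c :: u)], [::]; split => //.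
      by move=> q; rewrite inE => /eqP -> /=; apply/negw_cons.
    apply: (inIc_comb (ts := [::])) => //= w.
    by rewrite coef_defect /prefc /= coef_nil !coef1 big_nil; ring.
  by apply: IH => //; rewrite nac.
exists ([seq (q.1, c :: q.2) | q <- tm1] ++ scalec (sc a c) tm2),
       ([seq (q.1, c :: q.2) | q <- tp1] ++ scalec (sc a c) tp2); split.
- by apply: negc_cat; [exact: negc_cons|exact: negc_scale].
- by apply: plusc_cat; [exact: plusc_cons|exact: plusc_scale].
apply: (inIc_comb (ts := [:: (1, relw p a c u); (1, defect [:: (1, (p ++ [:: c]) ++ a :: u)]
     (prefc (p ++ [:: c]) tm1) 1 (prefc (p ++ [:: c]) tp1));
     (sc a c, defect [:: (1, p ++ ladd a c :: u)] (prefc p tm2) 1 (prefc p tp2))])).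
  apply: inIc_all_cons => //; apply: inIc_all_cons => //; apply: inIc_all_cons => //.
move=> w; rewrite !big_cons big_nil /= !coef_defect coef_relw !coef1 !coef_prefc_cat !coef_prefc_scale !coef_prefc_rcons -catA /=; ring.
Qed.

Lemma straighten_nonneg_comb p a t : onS p -> S a.2 -> ~~ lneg a -> negc t ->
  exists tm tp, [/\ negc tm, plusc tp &
    inIc (defect (prefc p [seq (q.1, a :: q.2) | q <- t]) (prefc p tm) 1 (prefc p tp))].
Proof.
move=> Sp Sa na; elim: t => [|q t IH] Nt.
  exists [::], [::]; split => //; apply: (inIc_comb (ts := [::])) => //= w.
  by rewrite coef_defect /prefc /= coef_nil big_nil; ring.
have Nq : negw q.2 by apply: Nt; rewrite mem_head.
have Nt' : negc t by move=> q' q't; apply: Nt; rewrite inE q't orbT.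
case: (IH Nt') => tm1 [tp1 [N1 G1 I1]].
case: (straighten_nonneg Nq Sp Sa na) => tm2 [tp2 [N2 G2 I2]].
exists (scalec q.1 tm2 ++ tm1), (scalec q.1 tp2 ++ tp1); split.
- by apply: negc_cat => //; apply: negc_scale.
- by apply: plusc_cat => //; apply: plusc_scale.
apply: (inIc_comb (ts := [:: (q.1, defect [:: (1, p ++ a :: q.2)] (prefc p tm2) 1 (prefc p tp2));
   (1, defect (prefc p [seq (q0.1, a :: q0.2) | q0 <- t]) (prefc p tm1) 1 (prefc p tp1))])).
  by apply: inIc_all_cons => //; apply: inIc_all_cons.
move=> w; rewrite !big_cons big_nil /= !coef_defect !coef_prefc_cat !coef_prefc_scale coef1.
rewrite coef_cons /=; ring.
Qed.

Lemma straighten_word (w : wd) : onS w -> forall p, onS p -> exists tm tp, straightening p w tm tp.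
Proof.
elim: w => [|a w IH] Sw0 p Sp.
  exists [:: (1, [::])], [::]; split => //.
    by move=> q; rewrite inE => /eqP ->.
  apply: (inIc_comb (ts := [::])) => //= w.
  by rewrite coef_defect /prefc /= coef_nil !coef1 cats0 big_nil; ring.
case/onS_cons: Sw0 => Sa Sw'.
have Spa : onS (p ++ [:: a]) by apply: onS_cat => // x; rewrite inE => /eqP ->.
case: (IH Sw' _ Spa) => tm1 [tp1 [N1 G1 I1]].
case na: (lneg a).
  exists [seq (q.1, a :: q.2) | q <- tm1], [seq (q.1, a :: q.2) | q <- tp1]; split.
  - exact: negc_cons.
  - exact: plusc_cons.
  apply: (inIc_coef I1) => x; rewrite !coef_defect !coef_prefc_rcons !coef1 -catA //.
case: (straighten_nonneg_comb Sp Sa (negbT na) N1) => tm2 [tp2 [N2 G2 I2]].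
exists tm2, ([seq (q.1, a :: q.2) | q <- tp1] ++ tp2); split => //.
  by apply: plusc_cat => //; apply: plusc_cons.
apply: (inIc_comb (ts := [:: (1, defect [:: (1, (p ++ [:: a]) ++ w)] (prefc (p ++ [:: a]) tm1) 1
   (prefc (p ++ [:: a]) tp1)); (1, defect (prefc p [seq (q.1, a :: q.2) | q <- tm1]) (prefc p tm2) 1 (prefc p tp2))])).
  by apply: inIc_all_cons => //; apply: inIc_all_cons.
move=> x; rewrite !big_cons big_nil /= !coef_defect !coef_prefc_cat !coef_prefc_rcons !coef1 -catA /=; ring.
Qed.

Lemma straighten_comb (t : comb wd) : (forall q, q \in t -> onS q.2) ->
  exists tm tp, [/\ negc tm, plusc tp & inIc (defect t tm 1 tp)].
Proof.
elim: t => [|q t IH] St.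
  exists [::], [::]; split => //; apply: (inIc_comb (ts := [::])) => //= x.
  by rewrite coef_defect coef_nil big_nil; ring.
case: IH => [q' q't|tm1 [tp1 [N1 G1 I1]]]; first by apply: St; rewrite inE q't orbT.
case: (straighten_word (St q (mem_head _ _)) (p := [::])) => // tm2 [tp2 [N2 G2 I2]].
exists (scalec q.1 tm2 ++ tm1), (scalec q.1 tp2 ++ tp1); split.
- by apply: negc_cat => //; apply: negc_scale.
- by apply: plusc_cat => //; apply: plusc_scale.
apply: (inIc_comb (ts := [:: (q.1, defect [:: (1, [::] ++ q.2)] (prefc [::] tm2) 1 (prefc [::] tp2));
   (1, defect t tm1 1 tp1)])).
  by apply: inIc_all_cons => //; apply: inIc_all_cons.
move=> x; rewrite !big_cons big_nil /= !coef_defect !coef_cat !coef_scalec coef_cons coef1.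
rewrite /coef !big_map /=; ring.
Qed.

Lemma straighten (mu : series) : inF S mu ->
  exists mum mup, [/\ inF S mum, supp_in mum (@Mminus _), inF S mup,
    supp_in mup (@Mplus _) & inI S C (ssub mu (sadd mum mup))].
Proof.
move=> Fm; have [t Ht ef] := inF_restr_coef Fm (@notMplusb_le A).
have [tm [tp [Ntm Gtp Itp]]] := straighten_comb Ht.
exists (coef tm), (fun w => (if Mplusb w then mu w else 0) + coef tp w); split.
- by apply: inF_coef => q /Ntm /negw_onS.
- move=> w /coef_supp /mapP [q /Ntm Nq ->] x /In_mem /Nq [_]; by rewrite /lneg.
- apply: inF_add; first exact: inF_restr.
  by apply: inF_coef => q /Gtp [].
- move=> w; case: (MplusP w) => [//|_]; rewrite add0r.
  by move/coef_supp/mapP => [q /Gtp [_ /MplusP Hq] ->].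
apply: (inI_ext Itp) => w; rewrite coef_defect -ef /ssub /sadd.
by case: (Mplusb w) => /=; ring.
Qed.

End Decomposition.

Section LieBracket.
Variables (L : vectType Cx) (br : L -> L -> L).
Hypothesis Hlie : lie_algebra br.

Lemma lie_brDl y1 y2 z : br (y1 + y2) z = br y1 z + br y2 z.
Proof. by case: Hlie => linl _ _ _; have := linl 1 y1 y2 z; rewrite !scale1r. Qed.

Lemma lie_brDr z y1 y2 : br z (y1 + y2) = br z y1 + br z y2.
Proof. by case: Hlie => _ linr _ _; have := linr 1 y1 y2 z; rewrite !scale1r. Qed.

Lemma lie_br0r z : br z 0 = 0.
Proof. by apply: (addrI (br z 0)); rewrite -lie_brDr !addr0. Qed.

Lemma lie_brZr (a : Cx) z y : br z (a *: y) = a *: br z y.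
Proof. by case: Hlie => _ linr _ _; have := linr a y 0 z; rewrite !addr0 lie_br0r addr0. Qed.

Lemma lie_br_anti y z : br y z = - br z y.
Proof.
case: Hlie => _ _ alt _; apply/eqP; rewrite -addr_eq0.
by have := alt (y + z); rewrite lie_brDl !lie_brDr !alt add0r addr0 => ->.
Qed.

End LieBracket.

Section StructureConstants.
Variables (L : vectType Cx) (br : L -> L -> L) (h : {vspace L}).
Variables (Pos S : hdual h -> Prop) (x : hdual h -> L) (C : hdual h -> hdual h -> Cx).
Hypotheses (Hlie : lie_algebra br) (HPos : positive_system br Pos).
Hypothesis Hx : forall al, is_root br al -> x al != 0 /\ in_rootspace br al (x al).
Hypothesis HSpos : forall al, S al -> Pos al.
Hypothesis HSclosed : forall al be, S al -> S be -> Pos (al + be) -> S (al + be).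
Hypothesis HC : forall al be, S al -> S be -> br (x al) (x be) = C al be *: x (al + be).
Hypothesis HC0 : forall al be, S al -> S be -> ~ is_root br (al + be) -> C al be = 0.

Lemma root_vector_scale_inj al (k1 k2 : Cx) :
  is_root br al -> k1 *: x al = k2 *: x al -> k1 = k2.
Proof.
move=> r /eqP; rewrite -subr_eq0 -scalerBl scaler_eq0 subr_eq0 => /orP [/eqP //|].
by case: (Hx r) => /negbTE ->.
Qed.

Lemma structure_constant_closed al be : S al -> S be -> C al be != 0 -> S (al + be).
Proof.
move=> Sal Sbe nz; case: HPos => _ _ _ Pcl; apply: HSclosed => //.
apply: Pcl; try exact: HSpos.
by apply: NNPP => nr; move: nz; rewrite (HC0 Sal Sbe nr) eqxx.
Qed.

Lemma structure_constant_anti al be : S al -> S be -> C al be = - C be al.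
Proof.
move=> Sal Sbe; have [r|nr] := classic (is_root br (al + be)); last first.
  by rewrite (HC0 Sal Sbe nr) (HC0 Sbe Sal) ?oppr0 // addrC.
apply: (root_vector_scale_inj r); rewrite scaleNr -HC // addrC -HC //.
exact: lie_br_anti.
Qed.

Lemma br_root_vectors3 al be ga : S al -> S be -> S ga ->
  br (x al) (br (x be) (x ga)) = (C be ga * C al (be + ga)) *: x (al + (be + ga)).
Proof.
move=> Sal Sbe Sga; rewrite (HC Sbe Sga) lie_brZr //.
have [->|nz] := eqVneq (C be ga) 0; first by rewrite !scale0r mul0r scale0r.
by rewrite (HC Sal (structure_constant_closed Sbe Sga nz)) scalerA.
Qed.

Lemma structure_constant_prod_nonroot al be ga : S al -> S be -> S ga ->
  ~ is_root br (al + (be + ga)) -> C be ga * C al (be + ga) = 0.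
Proof.
move=> Sal Sbe Sga nr; have [->|nz] := eqVneq (C be ga) 0; first by rewrite mul0r.
by rewrite (HC0 Sal (structure_constant_closed Sbe Sga nz) nr) mulr0.
Qed.

Lemma structure_constant_jacobi al be ga : S al -> S be -> S ga ->
  C be ga * C al (be + ga) + C ga al * C be (ga + al) + C al be * C ga (al + be) = 0.
Proof.
move=> Sal Sbe Sga.
have e1 : be + (ga + al) = al + (be + ga) by rewrite addrA [RHS]addrC.
have e2 : ga + (al + be) = al + (be + ga) by rewrite [LHS]addrC -addrA.
have [r|nr] := classic (is_root br (al + (be + ga))); last first.
  rewrite (structure_constant_prod_nonroot Sal Sbe Sga nr).
  rewrite (structure_constant_prod_nonroot Sbe Sga Sal) ?e1 //.
  by rewrite (structure_constant_prod_nonroot Sga Sal Sbe) ?e2 // !addr0.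
apply: (root_vector_scale_inj r); rewrite scale0r !scalerDl.
case: Hlie => _ _ _ jac; rewrite -(jac (x al) (x be) (x ga)).
by rewrite !br_root_vectors3 // e1 e2.
Qed.

End StructureConstants.

Theorem propositionA6
  (L : vectType Cx) (br : L -> L -> L)
  (Hlie : lie_algebra br) (Hss : semisimple br)
  (h : {vspace L}) (Hh : cartan_subalgebra br h)
  (Pos : hdual h -> Prop) (HPos : positive_system br Pos)
  (x : hdual h -> L)
  (Hx : forall al, is_root br al -> x al != 0 /\ in_rootspace br al (x al))
  (S : hdual h -> Prop)
  (HSne : exists al, S al)
  (HSpos : forall al, S al -> Pos al)
  (HSclosed : forall al be, S al -> S be -> Pos (al + be) -> S (al + be))
  (C : hdual h -> hdual h -> Cx)
  (HC : forall al be, S al -> S be -> br (x al) (x be) = C al be *: x (al + be))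
  (HC0 : forall al be, S al -> S be -> ~ is_root br (al + be) -> C al be = 0) :
  (forall mu, inF S mu ->
     exists mum mup,
       [/\ inF S mum, supp_in mum (@Mminus _), inF S mup, supp_in mup (@Mplus _) &
           inI S C (ssub mu (sadd mum mup))]) /\
  (forall mum mup, inF S mum -> supp_in mum (@Mminus _) ->
     inF S mup -> supp_in mup (@Mplus _) ->
     inI S C (ssub mum mup) -> inI S C mum).
Proof.
have C_closed := structure_constant_closed HPos HSpos HSclosed HC0.
have C_anti := structure_constant_anti Hlie Hx HC HC0.
have C_jacobi := structure_constant_jacobi Hlie HPos Hx HSpos HSclosed HC HC0.
split; first exact: straighten C_closed.
exact: inI_Mminus_sub_Mplus C_closed C_anti C_jacobi.
Qed.
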